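(* Consider the normalised two-player, two-market Cournot game with per-period utility $u(x,a)=-2x(x+a)$ for a player playing $x$ against an opponent playing $a$. Let $a_0\neq 0$ be the opponent's strategy at time $0$. Suppose the moving player responds with $c\,a_0$ for some $c\in\mathbb{R}$, and that the opponent, facing the same problem by symmetry, responds at the next step with $c\cdot(c\,a_0)=c^2a_0$. Let $$U_2(c)=u(c\,a_0,a_0)+u(c\,a_0,c^2a_0)$$ be the moving player's total utility over a time horizon of two steps. Then the critical points of $U_2$ on $\mathbb{R}$ are exactly $c=-1$ and $c=-\tfrac13$, and $c=-\tfrac13$ is the unique local maximiser of $U_2$; that is, the optimal response for a time horizon of two moves is $-\frac{a_0}{3}$.
   Context: Two players each have one unit of a homogeneous good (zero production and transportation cost) to split between two markets with inverse-linear demand. A player's strategy is normalised to a number in $[-1,1]$ with $0$ the unique Cournot equilibrium split; the normalised one-period utility (relative to equilibrium) of a player playing $x$ against an opponent playing $a$ is $u(x,a)=-2x(x+a)$. Players update their strategies alternately, each time responding to the opponent's current strategy. *)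

From Stdlib Require Import Reals.
From Coquelicot Require Import Coquelicot.
Open Scope R_scope.

Definition u (x a : R) : R := -2 * x * (x + a).

Definition U2 (a0 c : R) : R := u (c * a0) a0 + u (c * a0) (c * (c * a0)).

Definition critical_point (f : R -> R) (c : R) : Prop := is_derive f c 0.

Definition local_max (f : R -> R) (c : R) : Prop :=
  exists eps : R, 0 < eps /\ forall y : R, Rabs (y - c) < eps -> f y <= f c.

From Stdlib Require Import Reals Lra Psatz.
From Coquelicot Require Import Coquelicot.
Open Scope R_scope.

(* U2 a0 c = -2 a0² c (c + 1)², a cubic in c with a double root at -1 and
   derivative -2 a0² (3c + 1)(c + 1).  Fermat's rule leaves -1 and -1/3 as the
   only candidates for a local maximum; U2 a0 (-1) = 0 is exceeded just to the
   right of -1, while U2 a0 c - U2 a0 (-1/3) = -2 a0² (c + 1/3)² (c + 4/3) is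
   nonpositive on (-4/3, +oo). *)

Lemma critical_point_iff (f : R -> R) (c l : R) :
  is_derive f c l -> critical_point f c <-> l = 0.
Proof.
  intros Hf; unfold critical_point; split.
  - intros H0; rewrite <- (is_derive_unique f c l Hf); exact (is_derive_unique f c 0 H0).
  - intros ->; exact Hf.
Qed.

Lemma local_max_critical_point (f : R -> R) (c : R) :
  ex_derive f c -> local_max f c -> critical_point f c.
Proof.
  intros [l Hf] [eps [Heps Hmax]].
  apply (critical_point_iff f c l Hf).
  assert (Hd : derivable_pt f c) by (apply ex_derive_Reals_0; exists l; exact Hf).
  rewrite <- (is_derive_unique f c l Hf), <- (Derive_Reals f c Hd).
  apply (deriv_maximum f (c - eps) (c + eps)); try lra.
  intros x Hlo Hhi; apply Hmax, Rabs_def1; lra.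
Qed.

Lemma U2_factor (a0 c : R) : U2 a0 c = -2 * a0² * (c * (c + 1)²).
Proof. unfold U2, u, Rsqr; ring. Qed.

Lemma is_derive_U2 (a0 c : R) :
  is_derive (U2 a0) c (-2 * a0² * ((3 * c + 1) * (c + 1))).
Proof.
  apply (is_derive_ext (fun c => -2 * a0² * (c * (c + 1)²))).
  - intros t; symmetry; apply U2_factor.
  - auto_derive; [exact I | unfold Rsqr; ring].
Qed.

Lemma U2_derivative_eq0 (a0 c : R) : a0 <> 0 ->
  -2 * a0² * ((3 * c + 1) * (c + 1)) = 0 <-> c = -1 \/ c = -1/3.
Proof.
  intros ha0; pose proof (Rsqr_pos_lt a0 ha0) as Ha0; split.
  - intros Hzero.
    assert (Hc : (3 * c + 1) * (c + 1) = 0) by nra.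
    destruct (Rmult_integral _ _ Hc); [right | left]; lra.
  - intros [-> | ->]; field.
Qed.

Lemma U2_gt_at_minus_one (a0 h : R) : a0 <> 0 -> 0 < h < 1 ->
  U2 a0 (-1) < U2 a0 (-1 + h).
Proof.
  intros ha0 Hh; pose proof (Rsqr_pos_lt a0 ha0).
  rewrite !U2_factor; unfold Rsqr in *.
  assert (0 < h * h * (1 - h)) by (apply Rmult_lt_0_compat; nra).
  nra.
Qed.

Lemma not_local_max_U2_minus_one (a0 : R) : a0 <> 0 -> ~ local_max (U2 a0) (-1).
Proof.
  intros ha0 [eps [Heps Hmax]].
  set (h := Rmin (eps / 2) (1 / 2)).
  assert (Hh : 0 < h) by (apply Rmin_glb_lt; lra).
  assert (h <= eps / 2) by apply Rmin_l.
  assert (h <= 1 / 2) by apply Rmin_r.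
  assert (Hclose : Rabs (-1 + h - -1) < eps) by (rewrite Rabs_pos_eq; lra).
  pose proof (Hmax _ Hclose).
  pose proof (U2_gt_at_minus_one a0 h ha0 ltac:(lra)).
  lra.
Qed.

Lemma U2_sub_at_third (a0 c : R) :
  U2 a0 c - U2 a0 (-1/3) = -2 * a0² * ((c + 1/3)² * (c + 4/3)).
Proof. rewrite !U2_factor; unfold Rsqr; field. Qed.

Lemma local_max_U2_third (a0 : R) : local_max (U2 a0) (-1/3).
Proof.
  exists 1; split; [lra |].
  intros c Hc; apply Rabs_def2 in Hc.
  assert (0 <= a0² * ((c + 1/3)² * (c + 4/3))).
  { apply Rmult_le_pos; [apply Rle_0_sqr |].
    apply Rmult_le_pos; [apply Rle_0_sqr | lra]. }
  pose proof (U2_sub_at_third a0 c); lra.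
Qed.

Theorem theorem2 (a0 : R) (ha0 : a0 <> 0) :
  (forall c : R, ex_derive (U2 a0) c) /\
  (forall c : R, critical_point (U2 a0) c <-> (c = -1 \/ c = -1/3)) /\
  (forall c : R, local_max (U2 a0) c <-> c = -1/3).
Proof.
  assert (Hder : forall c, ex_derive (U2 a0) c) by (intros c; eexists; apply is_derive_U2).
  assert (Hcrit : forall c, critical_point (U2 a0) c <-> (c = -1 \/ c = -1/3)).
  { intros c; rewrite (critical_point_iff _ _ _ (is_derive_U2 a0 c)).
    exact (U2_derivative_eq0 a0 c ha0). }
  split; [exact Hder | split; [exact Hcrit |]].
  intros c; split.
  - intros Hmax.
    destruct (proj1 (Hcrit c) (local_max_critical_point _ _ (Hder c) Hmax)) as [-> | ->];
      [contradiction (not_local_max_U2_minus_one a0 ha0) | reflexivity].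
  - intros ->; apply local_max_U2_third.
Qed.
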